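(* For each integer $d \ge 2$ and each prime number $p$, there exists $c\in\mathbb{C}$ such that every critical point of the rational map $f(z) = z^{-d} + c$ on $\mathbb{P}^1_{\mathbb{C}}$ has exact period $p$.
   Context: The critical points of $f(z)=z^{-d}+c$ are $0$ and $\infty$. A point $P$ has exact period $p$ if $f^p(P)=P$ and $f^j(P)\neq P$ for $0<j<p$. *)

(* C is modelled as R[i] = complex R for R : realType
   (every realType is the real numbers up to isomorphism). *)
From mathcomp Require Import all_boot all_algebra.
From mathcomp Require Import reals.
From mathcomp.real_closed Require Import complex.
Import GRing.Theory.
Set Implicit Arguments. Unset Strict Implicit. Unset Printing Implicit Defensive.
Local Open Scope ring_scope.

Definition P1 (R : realType) := option R[i].
Definition infty {R : realType} : P1 R := None.

Definition fmap (R : realType) (d : nat) (c : R[i]) (P : P1 R) : P1 R :=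
  match P with
  | None => Some c
  | Some z => if z == 0 then None else Some (z ^- d + c)
  end.

Definition critical_points (R : realType) : seq (P1 R) := [:: Some 0; None].

Definition exact_period (T : Type) (g : T -> T) (p : nat) (P : T) : Prop :=
  iter p g P = P /\ forall j : nat, (0 < j < p)%N -> iter j g P <> P.

(* In homogeneous coordinates z = a/b the map z^{-d} + c lifts to
   (a, b) |-> (b^d + a^d c, a^d), so the forward orbit 0, ∞, c, ... of the
   critical point 0 is given by pairs of polynomials in c.  The numerator of
   the p-th iterate is non-constant for p >= 2; at any of its roots c (C is
   algebraically closed) we get f^p(0) = 0.  Since f(0) = ∞ is not 0 and p is
   prime, 0 has exact period p, and so does its image ∞. *)
From mathcomp Require Import all_boot all_algebra.
From mathcomp Require Import reals.
From mathcomp.real_closed Require Import complex.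
From mathcomp Require Import ring.
Import GRing.Theory.
Local Open Scope ring_scope.

Section ExactPeriod.
Context {T : Type} {f : T -> T}.

Lemma iter_mul_fixed {m x} k : iter m f x = x -> iter (k * m) f x = x.
Proof. by move=> fx; elim: k => [|k IHk] //; rewrite mulSn iterD IHk fx. Qed.

Lemma iter_gcdn_fixed {m n x} :
  iter m f x = x -> iter n f x = x -> iter (gcdn m n) f x = x.
Proof.
case: m => [|m] fmx fnx; first by rewrite gcd0n.
have [a _ /dvdnP [k def_k]] := Bezoutl n (ltn0Sn m).
by rewrite -{1}(iter_mul_fixed a fnx) -iterD def_k (iter_mul_fixed k fmx).
Qed.

Lemma exact_period_prime {p x} :
  prime p -> iter p f x = x -> f x <> x -> exact_period f p x.
Proof.
move=> p_pr fpx fx_ne_x; split=> // j /andP [j_gt0 j_lt_p] fjx.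
have /eqP cop : coprime p j by rewrite prime_coprime // gtnNdvd.
by apply: fx_ne_x; rewrite -[f x]/(iter 1 f x) -cop iter_gcdn_fixed.
Qed.

Lemma exact_period_succ {p x} : exact_period f p x -> exact_period f p (f x).
Proof.
case: p => [|p] [fpx min_p]; first by split=> // j; rewrite ltn0 andbF.
split; first by rewrite -iterSr iterS fpx.
move=> j j_range fjx; apply: (min_p j j_range).
have x_eq : x = iter p f (f x) by rewrite -iterSr fpx.
by rewrite x_eq -iterD addnC iterD fjx.
Qed.

End ExactPeriod.

Definition lift_fmap {R : comNzRingType} (d : nat) (c : R) (v : R * R) :=
  (v.2 ^+ d + v.1 ^+ d * c, v.1 ^+ d).

Definition orbit0 {R : comNzRingType} (d : nat) (c : R) (n : nat) : R * R :=
  iter n (lift_fmap d c) (0, 1).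

Lemma horner_orbit0 {R : comNzRingType} d (c : R) n :
  ((orbit0 d 'X n).1.[c], (orbit0 d 'X n).2.[c]) = orbit0 d c n.
Proof.
rewrite /orbit0; elim: n => [|n /= <-]; first by rewrite /= !hornerC.
by rewrite /lift_fmap /= !hornerE.
Qed.

Lemma lift_fmap_neq0 {F : idomainType} d (c : F) v :
  v != (0, 0) -> lift_fmap d c v != (0, 0).
Proof.
case: v => a b; rewrite /lift_fmap /= !xpair_eqE !negb_and.
have [-> | a_neq0 _] := eqVneq a 0; last by rewrite expf_neq0 ?orbT.
move=> /= b_neq0; case: d => [|d]; first by rewrite expr0 oner_eq0 orbT.
by rewrite [0 ^+ _]expr0n mul0r addr0 expf_neq0.
Qed.

Lemma size_lift_fmap {F : idomainType} d {v : {poly F} * {poly F}} :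
  (size v.2 < size v.1)%N ->
  let w := lift_fmap d 'X v in (size w.2 < size w.1)%N /\ (1 < size w.1)%N.
Proof.
case: v => a b /= size_ba.
have a_neq0 : a != 0 by rewrite -size_poly_gt0 (leq_ltn_trans _ size_ba).
have ad_neq0 : a ^+ d != 0 by rewrite expf_neq0.
have size_ad : size (a ^+ d) = ((size a).-1 * d).+1.
  by rewrite -size_exp prednK // size_poly_gt0.
have size_bd : (size (b ^+ d) < size (a ^+ d * 'X)%R)%N.
  rewrite size_mulX // size_ad ltnS (leq_trans (size_poly_exp_leq _ _)) //.
  by rewrite ltnS leq_mul2r -!subn1 (leq_sub2r 1 (ltnW size_ba)) orbT.
rewrite /lift_fmap /= addrC size_polyDl // size_mulX //.
by rewrite size_ad; split.
Qed.

Lemma orbit0_neq0 {F : idomainType} d (c : F) n : orbit0 d c n != (0, 0).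
Proof.
elim: n => [|n IHn]; last exact: lift_fmap_neq0.
by rewrite xpair_eqE oner_eq0 andbF.
Qed.

Lemma size_orbit0 (F : idomainType) d n : (0 < d)%N -> (1 < n)%N ->
  (1 < size (orbit0 d ('X : {poly F}) n).1)%N.
Proof.
move=> d_gt0; case: n => [|[|n]] // _.
pose orb m : {poly F} * {poly F} := orbit0 d 'X m.
suff size_inv m : (size (orb m.+1).2 < size (orb m.+1).1)%N.
  by have [] := size_lift_fmap d (size_inv n).
elim: m => [|m IHm]; last by have [] := size_lift_fmap d IHm.
rewrite /orb /orbit0 /lift_fmap /= expr1n expr0n eqn0Ngt d_gt0.
by rewrite size_poly0 mul0r addr0 size_poly1.
Qed.

Definition to_P1 {R : realType} (v : R[i] * R[i]) : P1 R :=
  if v.2 == 0 then infty else Some (v.1 / v.2).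

Lemma fmap_to_P1 {R : realType} d (c : R[i]) v : (0 < d)%N -> v != (0, 0) ->
  fmap d c (to_P1 v) = to_P1 (lift_fmap d c v).
Proof.
case: v => a b d_gt0; rewrite /to_P1 /lift_fmap xpair_eqE negb_and /=.
have zero_exp : (0 : R[i]) ^+ d = 0 by rewrite expr0n eqn0Ngt d_gt0.
have [-> /= | b_neq0 _] := eqVneq b 0.
  rewrite orbF => a_neq0; rewrite expf_eq0 (negbTE a_neq0) andbF zero_exp add0r.
  by rewrite [_ * c]mulrC mulfK ?expf_neq0.
rewrite /= mulf_eq0 invr_eq0 (negbTE b_neq0) orbF.
have [-> | a_neq0] := eqVneq a 0; first by rewrite zero_exp eqxx.
rewrite expf_eq0 (negbTE a_neq0) andbF; congr Some.
rewrite exprMn exprVn invfM invrK.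
by field; rewrite !expf_neq0.
Qed.

Lemma iter_fmap_to_P1 {R : realType} d (c : R[i]) n : (0 < d)%N ->
  iter n (fmap d c) (Some 0) = to_P1 (orbit0 d c n).
Proof.
move=> d_gt0; elim: n => [|n IHn]; first by rewrite /to_P1 /= oner_eq0 mul0r.
by rewrite /= IHn fmap_to_P1 ?orbit0_neq0.
Qed.

Theorem mainTheorem13 (R : realType) (d p : nat) :
  (2 <= d)%N -> prime p ->
  exists c : R[i], forall P : P1 R, P \in critical_points R ->
    exact_period (fmap d c) p P.
Proof.
move=> d_ge2 p_prime; have d_gt0 := ltnW d_ge2.
have /closed_rootP [c /rootP num_c] : size (orbit0 d ('X : {poly R[i]}) p).1 != 1%N.
  by rewrite neq_ltn size_orbit0 ?prime_gt1 ?orbT.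
exists c.
have orbit_c : orbit0 d c p = (0, (orbit0 d c p).2).
  by rewrite -horner_orbit0 num_c.
have den_neq0 : (orbit0 d c p).2 != 0.
  by have := orbit0_neq0 d c p; rewrite {1}orbit_c xpair_eqE eqxx.
have fp0 : iter p (fmap d c) (Some 0) = Some 0.
  by rewrite iter_fmap_to_P1 // /to_P1 (negbTE den_neq0) orbit_c mul0r.
have f0_neq0 : fmap d c (Some 0) <> Some 0 by rewrite /= eqxx.
have period0 := exact_period_prime p_prime fp0 f0_neq0.
have := exact_period_succ period0; rewrite /= eqxx => period_infty.
by move=> P; rewrite !inE => /orP [] /eqP ->.
Qed.
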